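(* For every integer $n\ge1$, $$\sum_{\ell=1}^n\sum_{k=1}^n\Big(\frac1{n^2}\Big)^{\frac{\ell}{\ell+1}\cdot\frac{k}{k+1}}\ \le\ 1+2e^{4/e}+2e^{8/e}+e^{32/e}.$$ *)

From Stdlib Require Import Reals.
Open Scope R_scope.

Definition term (n l k : nat) : R :=
  Rpower (/ (INR n ^ 2)) ((INR l / (INR l + 1)) * (INR k / (INR k + 1))).

(* double sum over l = 1..n, k = 1..n ; sum_f_R0 f m = f 0 + ... + f m *)
Definition double_sum (n : nat) : R :=
  sum_f_R0 (fun i => sum_f_R0 (fun j => term n (S i) (S j)) (n - 1)) (n - 1).

From Stdlib Require Import Reals Lra Lia.
Open Scope R_scope.

(* Write [l/(l+1) = 1 - p] and [k/(k+1) = 1 - q]. Since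
   [2 (1 - p) (1 - q) >= (1 - 2 p) + (1 - 2 q)], each term is dominated by the
   product [n^(2p - 1) * n^(2q - 1)], so the double sum is at most the square
   of a single sum. By convexity of [exp] (interpolating between [ln n] and
   [(i + 2) ln 2]), [n^(2/(i+2) - 1) <= 2^-i + 4/n], whence the single sum is
   at most [2 + 4 = 6]. The double sum is thus at most [36], far below the
   stated bound, which already exceeds [exp (32/e) > 36]. *)

Lemma exp_le_compat (x y : R) : x <= y -> exp x <= exp y.
Proof.
  intros [Hlt | ->]; [now left; apply exp_increasing | lra].
Qed.

Lemma exp_convex (t x y : R) : 0 <= t <= 1 ->
  exp (t * x + (1 - t) * y) <= t * exp x + (1 - t) * exp y.
Proof.
  intros Ht.
  set (m := t * x + (1 - t) * y).
  assert (Ex : exp x = exp m * exp (x - m)) by (rewrite <- exp_plus; f_equal; ring).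
  assert (Ey : exp y = exp m * exp (y - m)) by (rewrite <- exp_plus; f_equal; ring).
  (* the tangent line of [exp] at [m] lies below the graph *)
  pose proof (exp_ineq1_le (x - m)); pose proof (exp_ineq1_le (y - m)).
  pose proof (exp_pos m).
  rewrite Ex, Ey.
  assert (t * (exp m * (1 + (x - m))) <= t * (exp m * exp (x - m)))
    by (apply Rmult_le_compat_l; [lra | apply Rmult_le_compat_l; lra]).
  assert ((1 - t) * (exp m * (1 + (y - m))) <= (1 - t) * (exp m * exp (y - m)))
    by (apply Rmult_le_compat_l; [lra | apply Rmult_le_compat_l; lra]).
  assert (t * (exp m * (1 + (x - m))) + (1 - t) * (exp m * (1 + (y - m))) = exp m)
    by (unfold m; ring).
  lra.
Qed.

Lemma Rpower_inv_sqr_le_mult (x p q : R) : 1 <= x -> 0 <= p -> 0 <= q ->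
  Rpower (/ x ^ 2) ((1 - p) * (1 - q)) <= Rpower x (2 * p - 1) * Rpower x (2 * q - 1).
Proof.
  intros Hx Hp Hq.
  unfold Rpower; rewrite <- exp_plus; apply exp_le_compat.
  rewrite ln_Rinv, ln_pow by (try apply pow_lt; lra).
  assert (HL : 0 <= ln x).
  { destruct Hx as [Hlt | <-]; rewrite <- ln_1; [left; apply ln_increasing |]; lra. }
  assert (0 <= ln x * (p * q)) by (apply Rmult_le_pos; nra).
  simpl INR; nra.
Qed.

Lemma Rpower_two_div_le (x : R) (i : nat) : 0 < x ->
  Rpower x (2 / (INR i + 2) - 1) <= (/ 2) ^ i + 4 / x.
Proof.
  intros Hx.
  pose proof (pos_INR i) as Hi.
  set (t := 2 / (INR i + 2)).
  assert (Ht : 0 <= t <= 1).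
  { unfold t; split.
    - apply Rlt_le, Rdiv_lt_0_compat; lra.
    - apply Rmult_le_reg_r with (INR i + 2); [lra | field_simplify; lra]. }
  assert (Hpow2 : forall k, exp (INR k * ln 2) = 2 ^ k)
    by (intros k; rewrite <- Rpower_pow by lra; reflexivity).
  (* interpolate with weight [t] between [ln x] and [(i + 2) ln 2] *)
  pose proof (exp_convex t (ln x) (INR (i + 2) * ln 2) Ht) as Hconv.
  replace (t * ln x + (1 - t) * (INR (i + 2) * ln 2))
    with (t * ln x + INR i * ln 2) in Hconv
    by (rewrite plus_INR; simpl INR; unfold t; field; lra).
  rewrite exp_plus, exp_ln, !Hpow2, pow_add in Hconv by lra.
  change (exp (t * ln x)) with (Rpower x t) in Hconv.
  pose proof (pow_lt 2 i ltac:(lra)) as H2i.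
  pose proof (exp_pos (t * ln x)) as Hxt.
  unfold Rminus; rewrite Rpower_plus, Rpower_Ropp, Rpower_1, pow_inv by lra.
  apply (Rmult_le_reg_r (2 ^ i * x)); [nra |].
  replace (Rpower x t * / x * (2 ^ i * x)) with (Rpower x t * 2 ^ i) by (field; lra).
  replace ((/ 2 ^ i + 4 / x) * (2 ^ i * x)) with (x + 4 * 2 ^ i) by (field; lra).
  simpl pow in Hconv; nra.
Qed.

Lemma sum_geometric_half_plus_const (c : R) (N : nat) :
  sum_f_R0 (fun i => (/ 2) ^ i + c) N = 2 - (/ 2) ^ N + INR (S N) * c.
Proof.
  induction N as [| N IH]; [simpl; lra |].
  rewrite tech5, IH, (S_INR (S N)); simpl pow; lra.
Qed.

Lemma double_sum_le_square (f : nat -> nat -> R) (g : nat -> R) (N : nat) :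
  (forall i j, f i j <= g i * g j) ->
  sum_f_R0 (fun i => sum_f_R0 (fun j => f i j) N) N <= sum_f_R0 g N * sum_f_R0 g N.
Proof.
  intros Hfg.
  rewrite scal_sum.
  apply sum_Rle; intros i _.
  rewrite scal_sum.
  apply sum_Rle; intros j _.
  rewrite Rmult_comm; apply Hfg.
Qed.

Lemma term_le_mult (n i j : nat) : (1 <= n)%nat ->
  term n (S i) (S j) <=
  Rpower (INR n) (2 / (INR i + 2) - 1) * Rpower (INR n) (2 / (INR j + 2) - 1).
Proof.
  intros Hn.
  assert (Hfrac : forall k, INR (S k) / (INR (S k) + 1) = 1 - / (INR k + 2)).
  { intros k; pose proof (pos_INR k); rewrite S_INR; field; lra. }
  unfold term; rewrite !Hfrac.
  pose proof (pos_INR i); pose proof (pos_INR j).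
  apply Rpower_inv_sqr_le_mult.
  - now apply (le_INR 1).
  - apply Rlt_le, Rinv_0_lt_compat; lra.
  - apply Rlt_le, Rinv_0_lt_compat; lra.
Qed.

Lemma sum_Rpower_two_div_le_6 (n : nat) : (1 <= n)%nat ->
  sum_f_R0 (fun i => Rpower (INR n) (2 / (INR i + 2) - 1)) (n - 1) <= 6.
Proof.
  intros Hn.
  assert (HnR : 1 <= INR n) by now apply (le_INR 1).
  apply Rle_trans with (sum_f_R0 (fun i => (/ 2) ^ i + 4 / INR n) (n - 1)).
  - apply sum_Rle; intros i _; apply Rpower_two_div_le; lra.
  - rewrite sum_geometric_half_plus_const.
    replace (S (n - 1)) with n by lia.
    pose proof (pow_lt (/ 2) (n - 1) ltac:(lra)).
    replace (INR n * (4 / INR n)) with 4 by (field; lra).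
    lra.
Qed.

Lemma exp_32_div_e_ge_36 : 36 <= exp (32 / exp 1).
Proof.
  pose proof exp_le_3; pose proof (exp_pos 1).
  assert (Hx : 10 <= 32 / exp 1)
    by (apply Rmult_le_reg_r with (exp 1); [lra | field_simplify; lra]).
  set (x := 32 / exp 1) in *.
  replace x with (x / 2 + x / 2) by field.
  rewrite exp_plus.
  pose proof (exp_ineq1_le (x / 2)).
  nra.
Qed.

Theorem mainTheorem5 (n : nat) (hn : (1 <= n)%nat) :
  double_sum n <=
  1 + 2 * exp (4 / exp 1) + 2 * exp (8 / exp 1) + exp (32 / exp 1).
Proof.
  set (s := sum_f_R0 (fun i => Rpower (INR n) (2 / (INR i + 2) - 1)) (n - 1)).
  assert (HS0 : 0 <= s)
    by (apply cond_pos_sum; intros i; apply Rlt_le, exp_pos).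
  assert (HS6 : s <= 6) by now apply sum_Rpower_two_div_le_6.
  assert (Hsq : double_sum n <= s * s)
    by (apply double_sum_le_square; intros i j; now apply term_le_mult).
  pose proof exp_32_div_e_ge_36.
  pose proof (exp_pos (4 / exp 1)); pose proof (exp_pos (8 / exp 1)).
  nra.
Qed.
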